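(* For every $0<\gamma<1/100$ there exists $n_0$ such that for all $n\ge n_0$ the following holds. Suppose $H$ is a $3$-graph of order $n$ with $\delta_2(H)\ge(1/2-\gamma)n$. Let $X,Y$ be any bipartition of $V(H)$ with $|X|,|Y|\ge n/5$. If $H$ is not $3\gamma$-extremal, then $H$ has at least $\gamma^2n^3$ $XXY$-edges and at least $\gamma^2n^3$ $XYY$-edges.
   Context: A $3$-graph is a $3$-uniform hypergraph; $\delta_2(H)$ is the minimum over pairs of distinct vertices of the number of edges containing the pair. An $XXY$-edge is an edge with exactly two vertices in $X$ and one in $Y$; an $XYY$-edge has one vertex in $X$ and two in $Y$. For disjoint $A,B$, $\mathcal B[A,B]$ is the $3$-graph on $A\cup B$ whose edges are all triples with an odd number of vertices in $A$. $H$ $\gamma$-contains $H'$ (same vertex set $V$) if $|E(H')\setminus E(H)|\le\gamma|V|^3$. $H$ on $n$ vertices is $\gamma$-extremal if there is a partition $V(H)=A\cup B$ with $|A|=\lfloor n/2\rfloor$, $|B|=\lceil n/2\rceil$ such that $H$ $\gamma$-contains $\mathcal B[A,B]$. *)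

From HB Require Import structures.
From mathcomp Require Import all_boot all_order all_algebra.
Set Implicit Arguments. Unset Strict Implicit. Unset Printing Implicit Defensive.
Import Order.TTheory GRing.Theory Num.Theory.

Definition is_3graph (n : nat) (E : {set {set 'I_n}}) : Prop :=
  forall e, e \in E -> #|e| = 3.

Definition codeg (n : nat) (E : {set {set 'I_n}}) (x y : 'I_n) : nat :=
  #|[set e in E | (x \in e) && (y \in e)]|.

Definition edges_meeting (n : nat) (E : {set {set 'I_n}}) (X : {set 'I_n}) (k : nat)
  : {set {set 'I_n}} := [set e in E | #|e :&: X| == k].

(* XXY-edges: exactly two vertices in X (and one in Y = complement of X) *)
Definition XXY_edges n (E : {set {set 'I_n}}) (X : {set 'I_n}) := edges_meeting E X 2.
Definition XYY_edges n (E : {set {set 'I_n}}) (X : {set 'I_n}) := edges_meeting E X 1.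

(* B[A, B] with B = complement of A: all triples with an odd number of vertices in A *)
Definition Bgraph (n : nat) (A : {set 'I_n}) : {set {set 'I_n}} :=
  [set e : {set 'I_n} | (#|e| == 3) && odd #|e :&: A|].

Definition gcontains (R : realFieldType) (n : nat) (g : R)
  (E E' : {set {set 'I_n}}) : Prop :=
  (#|E' :\: E|%:R <= g * (n%:R) ^+ 3)%R.

Definition extremal (R : realFieldType) (n : nat) (g : R) (E : {set {set 'I_n}}) : Prop :=
  exists A : {set 'I_n}, #|A| = n./2 /\ #|~: A| = uphalf n /\ gcontains g E (Bgraph A).

(* Suppose H has fewer than g^2 n^3 XXY-edges. Every pair x in X, y in Y has
   codegree at least (1/2 - g) n, and almost all edges through such a pair are
   XYY-edges, of which there are at most |Y| through the pair; double counting
   forces |Y| >= (1/2 - 3g/2) n and shows that few XYY-triples are missing from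
   H.  The same count over pairs inside X forces |X| >= (1/2 - 2g) n and shows
   that few XXX-triples are missing.  Hence H nearly contains B[X, Y] with
   ||X| - n/2| <= 2 g n; moving at most 2 g n + 1/2 vertices to balance the
   partition exactly loses at most C(n, 2) triples per vertex, so H is
   3g-extremal.  XYY-edges for (X, Y) are XXY-edges for (Y, X). *)

From mathcomp Require Import all_boot all_order all_algebra.
From mathcomp Require Import zify ring lra.
Import Order.TTheory GRing.Theory Num.Theory.
Set Implicit Arguments.
Unset Strict Implicit.
Unset Printing Implicit Defensive.

Section FiniteSets.
Variable T : finType.
Implicit Types (A B S Z e : {set T}) (G : {set {set T}}).

Lemma card_le_bin_extensions G S Z j :
  (forall t, t \in G -> [/\ S \subset t, t :\: S \subset Z & #|t :\: S| = j]) ->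
  #|G| <= 'C(#|Z|, j).
Proof.
move=> hG.
have inj : {in G &, injective (fun t => t :\: S)}.
  move=> t1 t2 /hG [s1 _ _] /hG [s2 _ _] eq12; apply/setP => z.
  have [zS | zNS] := boolP (z \in S).
    by rewrite (subsetP s1 _ zS) (subsetP s2 _ zS).
  by have := congr1 (fun U : {set T} => z \in U) eq12; rewrite /= !inE zNS.
rewrite -(card_in_imset inj) -cards_draws; apply: subset_leq_card.
by apply/subsetP => _ /imsetP [t /hG [_ tZ tj] ->]; rewrite inE tZ tj eqxx.
Qed.

Lemma sum_mem_card A e : \sum_(x in A) (x \in e) = #|e :&: A|.
Proof.
rewrite -sum1_card big_mkcond [RHS]big_mkcond /=.
by apply: eq_bigr => x _; rewrite inE andbC; case: (x \in A); case: (x \in e).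
Qed.

Lemma cardsIC e A : #|e :&: ~: A| = #|e| - #|e :&: A|.
Proof. by rewrite -setDE -(cardsID A e) addKn. Qed.

Lemma exists_subset_card B k :
  k <= #|B| -> exists2 C : {set T}, C \subset B & #|C| = k.
Proof.
move=> kB; have : 0 < 'C(#|B|, k) by rewrite bin_gt0.
by rewrite -cards_draws => /card_gt0P [C]; rewrite inE => /andP [CB /eqP]; exists C.
Qed.

Lemma exists_card_near A k : k <= #|T| ->
  exists2 C : {set T}, #|C| = k & #|(C :\: A) :|: (A :\: C)| <= `|#|A| - k|.
Proof.
move=> kT; have cA := cardsC A.
have [kA | Ak] := leqP k #|A|.
  have [C CA Ck] := exists_subset_card kA; exists C => //.
  have /eqP -> : C :\: A == set0 by rewrite setD_eq0.
  by rewrite distnEl // set0U cardsD (setIidPr CA) Ck.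
have kA : k - #|A| <= #|~: A| by lia.
have [C CA Ck] := exists_subset_card kA.
have dAC : [disjoint A & C] by rewrite disjoint_sym disjoints_subset.
exists (A :|: C); first by rewrite cardsU (disjoint_setI0 dAC) cards0 Ck; lia.
have /eqP -> : A :\: (A :|: C) == set0 by rewrite setD_eq0 subsetUl.
rewrite distnEr ?(ltnW Ak) // setU0 setDUl setDv set0U.
by rewrite (setDidPl _) ?Ck // disjoint_sym.
Qed.

Lemma card_triples_through v :
  #|[set t : {set T} | (#|t| == 3) && (v \in t)]| <= 'C(#|T|, 2).
Proof.
rewrite -cardsT; apply: (@card_le_bin_extensions _ [set v]) => t.
rewrite inE => /andP [/eqP t3 vt]; split; [by rewrite sub1set | exact: subsetT |].
by rewrite cardsD t3 (setIidPr _) ?cards1 // sub1set.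
Qed.

Lemma card_triples_meeting Z :
  #|[set t : {set T} | (#|t| == 3) && ~~ [disjoint t & Z]]| <= #|Z| * 'C(#|T|, 2).
Proof.
rewrite -sum1_card big_mkcond /=.
apply: leq_trans (_ : _ <= \sum_(t : {set T}) \sum_(v in Z) ((#|t| == 3) && (v \in t))) _.
  apply: leq_sum => t _; rewrite inE; case: (#|t| == 3) => //=.
  have [//|/= ntZ] := boolP [disjoint t & Z].
  by rewrite sum_mem_card lt0n cards_eq0 setI_eq0.
rewrite exchange_big /= -sum_nat_const; apply: leq_sum => v _.
apply: leq_trans (card_triples_through v); rewrite -sum1_card [leqRHS]big_mkcond /=.
by apply: leq_sum => t _; rewrite inE; case: (_ && _).
Qed.

End FiniteSets.

Section Codegree.
Variable n : nat.
Implicit Types (A B X Z : {set 'I_n}) (E G : {set {set 'I_n}}).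

Lemma codegE G x y : codeg G x y = \sum_(e in G) ((x \in e) && (y \in e)).
Proof.
rewrite /codeg -sum1_card big_mkcond [RHS]big_mkcond /=.
by apply: eq_bigr => e _; rewrite inE; case: (e \in G); case: (x \in e); case: (y \in e).
Qed.

Lemma sum_codeg G A (B : 'I_n -> {set 'I_n}) :
  \sum_(x in A) \sum_(y in B x) codeg G x y =
  \sum_(e in G) \sum_(x in A) (x \in e) * #|e :&: B x|.
Proof.
under eq_bigr => x _ do under eq_bigr => y _ do rewrite codegE.
under eq_bigr => x _ do rewrite exchange_big.
rewrite exchange_big; apply: eq_bigr => e _; apply: eq_bigr => x _.
rewrite -sum_mem_card big_distrr /=; apply: eq_bigr => y _.
by case: (x \in e); case: (y \in e).
Qed.

Lemma sum_codeg_across G A B :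
  \sum_(x in A) \sum_(y in B) codeg G x y = \sum_(e in G) #|e :&: A| * #|e :&: B|.
Proof.
rewrite (@sum_codeg G A (fun _ => B)); apply: eq_bigr => e _.
by rewrite -[in RHS]sum_mem_card big_distrl.
Qed.

Lemma sum_codeg_within G A :
  \sum_(x in A) \sum_(y in A :\ x) codeg G x y = \sum_(e in G) #|e :&: A| * #|e :&: A|.-1.
Proof.
rewrite (@sum_codeg G A (fun x => A :\ x)); apply: eq_bigr => e _.
rewrite -[X in _ = X * _]sum_mem_card big_distrl /=; apply: eq_bigr => x xA.
have [xe|] //= := boolP (x \in e); rewrite !mul1n.
by rewrite (cardsD1 x (e :&: A)) inE xe xA setIDA.
Qed.

Lemma codeg_le_card G Z x y : x != y ->
  (forall t, t \in G -> x \in t -> y \in t -> #|t| = 3 /\ t :\: [set x; y] \subset Z) ->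
  codeg G x y <= #|Z|.
Proof.
move=> nxy hG; rewrite -(bin1 #|Z|); apply: (@card_le_bin_extensions _ _ [set x; y]) => t.
rewrite inE => /andP [tG /andP [xt yt]]; have [t3 tZ] := hG t tG xt yt.
have xyt : [set x; y] \subset t by rewrite subUset !sub1set xt yt.
by split=> //; rewrite cardsD t3 (setIidPr xyt) cards2 nxy.
Qed.

Lemma codeg_le_meeting G X k1 k2 x y :
  (forall e, e \in G -> x \in e -> y \in e -> (#|e :&: X| == k1) || (#|e :&: X| == k2)) ->
  codeg G x y <= codeg (edges_meeting G X k1) x y + codeg (edges_meeting G X k2) x y.
Proof.
move=> hG; rewrite /codeg; apply: leq_trans (leq_card_setU _ _).
apply: subset_leq_card; apply/subsetP => e; rewrite !inE => /andP [eG /andP [xe ye]].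
by rewrite eG xe ye; case/orP: (hG e eG xe ye) => ->; rewrite ?orbT.
Qed.

Lemma edges_meetingU E G X k :
  edges_meeting (E :|: G) X k = edges_meeting E X k :|: edges_meeting G X k.
Proof. by apply/setP => e; rewrite !inE andb_orl. Qed.

Lemma edges_meeting_sub G X k : edges_meeting G X k \subset G.
Proof. by apply/subsetP => e; rewrite inE => /andP []. Qed.

End Codegree.

Section Triples.
Variables (n : nat) (X : {set 'I_n}).
Implicit Types (E G : {set {set 'I_n}}) (x y : 'I_n).
Local Notation meet G k := (edges_meeting G X k).

Lemma is_3graph_sub E G : G \subset E -> is_3graph E -> is_3graph G.
Proof. by move=> /subsetP GE hE e /GE /hE. Qed.

Lemma is_3graphU E G : is_3graph E -> is_3graph G -> is_3graph (E :|: G).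
Proof. by move=> hE hG e; rewrite inE => /orP [/hE | /hG]. Qed.

Lemma is_3graph_Bgraph : is_3graph (Bgraph X).
Proof. by move=> e; rewrite inE => /andP [/eqP]. Qed.

Lemma is_3graph_missing E : is_3graph (Bgraph X :\: E).
Proof. exact: is_3graph_sub (subsetDl _ _) is_3graph_Bgraph. Qed.

Lemma missing_disjoint E : [disjoint E & Bgraph X :\: E].
Proof. by rewrite disjoint_sym disjoints_subset subDset setUCr subsetT. Qed.

Lemma card_edges_meetingU E G k :
  [disjoint E & G] -> #|meet (E :|: G) k| = #|meet E k| + #|meet G k|.
Proof.
move=> dEG; rewrite edges_meetingU; apply/eqP; rewrite (leq_card_setU _ _).2.
by apply: disjointW dEG; apply: edges_meeting_sub.
Qed.

Lemma XYY_edgesE E : is_3graph E -> XYY_edges E X = XXY_edges E (~: X).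
Proof.
move=> hE; apply/setP => e; rewrite !inE; have [/hE e3|] //= := boolP (e \in E).
have := subset_leq_card (subsetIl e X); rewrite cardsIC e3.
by case: #|e :&: X| => [|[|[|[|k]]]].
Qed.

Lemma sum_codeg_across_meeting G k : is_3graph G ->
  \sum_(x in X) \sum_(y in ~: X) codeg (meet G k) x y = #|meet G k| * (k * (3 - k)).
Proof.
move=> hG; rewrite sum_codeg_across -sum_nat_const; apply: eq_bigr => e.
by rewrite inE => /andP [/hG e3 /eqP ek]; rewrite cardsIC e3 ek.
Qed.

Lemma sum_codeg_within_meeting G k :
  \sum_(x in X) \sum_(y in X :\ x) codeg (meet G k) x y = #|meet G k| * (k * k.-1).
Proof.
rewrite sum_codeg_within -sum_nat_const; apply: eq_bigr => e.
by rewrite inE => /andP [_ /eqP ->].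
Qed.

Lemma codeg_across_le E x y : is_3graph E -> x \in X -> y \notin X ->
  codeg E x y <= codeg (meet E 1) x y + codeg (meet E 2) x y.
Proof.
move=> hE xX yNX; apply: codeg_le_meeting => e /hE e3 xe ye.
have : 0 < #|e :&: X| by apply/card_gt0P; exists x; rewrite inE xe xX.
have : 0 < #|e :&: ~: X| by apply/card_gt0P; exists y; rewrite !inE ye yNX.
by rewrite cardsIC e3; case: #|e :&: X| => [|[|[|[|k]]]].
Qed.

Lemma codeg_within_le E x y : is_3graph E -> x \in X -> y \in X -> x != y ->
  codeg E x y <= codeg (meet E 3) x y + codeg (meet E 2) x y.
Proof.
move=> hE xX yX nxy; apply: codeg_le_meeting => e /hE e3 xe ye.
have : #|[set x; y]| <= #|e :&: X|.
  by apply: subset_leq_card; rewrite subUset !sub1set !inE xe ye xX yX.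
have := subset_leq_card (subsetIl e X).
by rewrite cards2 nxy e3; case: #|e :&: X| => [|[|[|[|k]]]].
Qed.

Lemma codeg_meeting1_le G x y : is_3graph G -> x \in X -> y \notin X ->
  codeg (meet G 1) x y <= #|~: X|.
Proof.
move=> hG xX yNX; apply: codeg_le_card; first by apply: contraNneq yNX => <-.
move=> t; rewrite inE => /andP [/hG t3 /eqP t1] xt yt; split=> //.
apply/subsetP => z; rewrite !inE => /andP [/norP [zx _] zt]; apply/negP => zX.
have : #|[set x; z]| <= #|t :&: X|.
  by apply: subset_leq_card; rewrite subUset !sub1set !inE xt xX zt zX.
by rewrite cards2 t1 eq_sym zx.
Qed.

Lemma codeg_meeting3_le G x y : is_3graph G -> x != y -> codeg (meet G 3) x y <= #|X|.
Proof.
move=> hG nxy; apply: codeg_le_card => // t; rewrite inE => /andP [/hG t3 /eqP tX] _ _.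
split=> //; apply: subset_trans (subsetDl _ _) _.
by apply/setIidPl/eqP; rewrite eqEcard subsetIl t3 tX.
Qed.

Lemma sum_codeg_across_le E : is_3graph E ->
  \sum_(x in X) \sum_(y in ~: X) codeg E x y <= 2 * #|meet E 1| + 2 * #|meet E 2|.
Proof.
move=> hE; apply: leq_trans (_ : _ <= \sum_(x in X) \sum_(y in ~: X)
   (codeg (meet E 1) x y + codeg (meet E 2) x y)) _.
  by apply: leq_sum => x xX; apply: leq_sum => y; rewrite inE => yNX; apply: codeg_across_le.
under eq_bigr => x _ do rewrite big_split.
by rewrite big_split /= !sum_codeg_across_meeting // mulnC [_ * (2 * _)]mulnC.
Qed.

Lemma sum_codeg_within_le E : is_3graph E ->
  \sum_(x in X) \sum_(y in X :\ x) codeg E x y <= 6 * #|meet E 3| + 2 * #|meet E 2|.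
Proof.
move=> hE; apply: leq_trans (_ : _ <= \sum_(x in X) \sum_(y in X :\ x)
   (codeg (meet E 3) x y + codeg (meet E 2) x y)) _.
  apply: leq_sum => x xX; apply: leq_sum => y; rewrite !inE => /andP [yx yX].
  by apply: codeg_within_le; rewrite // eq_sym.
under eq_bigr => x _ do rewrite big_split.
by rewrite big_split /= !sum_codeg_within_meeting mulnC [_ * (2 * _)]mulnC.
Qed.

Lemma card_meeting1_le G : is_3graph G -> 2 * #|meet G 1| <= #|X| * (#|~: X| * #|~: X|).
Proof.
move=> hG; rewrite mulnC -(muln1 2) -[2 * 1]/(1 * (3 - 1)) -sum_codeg_across_meeting //.
rewrite -sum_nat_const; apply: leq_sum => x xX.
rewrite -sum_nat_const; apply: leq_sum => y; rewrite inE => yNX.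
exact: codeg_meeting1_le.
Qed.

Lemma card_meeting3_le G : is_3graph G -> 6 * #|meet G 3| <= #|X| * (#|X|.-1 * #|X|).
Proof.
move=> hG; rewrite mulnC -[6]/(3 * 3.-1) -sum_codeg_within_meeting.
rewrite -sum_nat_const; apply: leq_sum => x xX.
have -> : #|X|.-1 = #|X :\ x| by rewrite (cardsD1 x X) xX.
rewrite -sum_nat_const; apply: leq_sum => y; rewrite !inE => /andP [yx _].
by apply: codeg_meeting3_le; rewrite // eq_sym.
Qed.

Lemma card_sub_Bgraph_le G : G \subset Bgraph X -> #|G| <= #|meet G 1| + #|meet G 3|.
Proof.
move=> /subsetP GB; apply: leq_trans (leq_card_setU _ _); apply: subset_leq_card.
apply/subsetP => e eG; have := GB e eG; rewrite !inE eG => /andP [/eqP e3 odde].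
have := subset_leq_card (subsetIl e X); rewrite e3.
by move: odde; case: #|e :&: X| => [|[|[|[|k]]]].
Qed.

Lemma card_missing_switch E A :
  #|Bgraph A :\: E| <= #|Bgraph X :\: E| + #|(A :\: X) :|: (X :\: A)| * 'C(n, 2).
Proof.
set D := (A :\: X) :|: (X :\: A).
apply: leq_trans (_ : _ <= #|(Bgraph X :\: E) :|:
   [set t : {set 'I_n} | (#|t| == 3) && ~~ [disjoint t & D]]|) _; last first.
  apply: leq_trans (leq_card_setU _ _) _; rewrite leq_add2l.
  by have := card_triples_meeting D; rewrite card_ord.
apply: subset_leq_card; apply/subsetP => t; rewrite !inE => /andP [tNE /andP [t3 todd]].
rewrite t3 tNE /=; have [dtD|] := boolP [disjoint t & D]; last by rewrite orbT.
rewrite orbF.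
(* a triple avoiding the symmetric difference of A and X meets them alike *)
suff -> : t :&: X = t :&: A by [].
apply/setP => z; rewrite !inE; have [zt|] //= := boolP (z \in t).
have : z \notin D by move: dtD; rewrite disjoint_sym => /disjointFl ->.
by rewrite !inE; case: (z \in A); case: (z \in X).
Qed.

End Triples.

Lemma card_setC_half n (A : {set 'I_n}) : #|A| = n./2 -> #|~: A| = uphalf n.
Proof.
move=> An; have := cardsC A; have := odd_double_half n.
rewrite card_ord An uphalf_half -muln2; lia.
Qed.

Local Open Scope ring_scope.

Lemma sqr_cube_le (R : realFieldType) (g n : R) :
  0 < g -> g < 1/100 -> 0 <= n -> g^+2 * n^+3 <= g * n^+3 / 100.
Proof.
move=> g0 g1 n0; have gg : g^+2 <= g / 100 by rewrite expr2; nra.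
by have := ler_wpM2r (exprn_ge0 3 n0) gg; lra.
Qed.

(* Below, a = |X|, b = |~: X|, m counts the XXY-edges, and f1, f3 count the
   triples of B[X, ~: X] with one, resp. three, vertices in X missing from H;
   the hypotheses [_ <= _ + 2 * m] are the pair counts [across_pair_count]
   and [within_pair_count]. *)
Lemma across_count_complement_ge (R : realFieldType) (g n m a b f1 : R) :
  0 < g -> g < 1/100 -> 0 < n -> m < g^+2 * n^+3 ->
  a + b = n -> n/5 <= a -> n/5 <= b -> 0 <= f1 ->
  a * b * ((1/2 - g) * n) + 2 * f1 <= a * b * b + 2 * m -> n/2 - 3/2 * g * n <= b.
Proof.
move=> g0 g1 n0 mlt ab an bn f0 hcount; rewrite leNgt; apply/negP => bl.
have hab : n^+2/25 <= a * b by nra.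
have : n^+2/25 * (g * n/2) <= a * b * ((1/2 - g) * n - b) by apply: ler_pM; nra.
have -> : n^+2/25 * (g * n/2) = n^+3 * g / 50 by field.
have := sqr_cube_le g0 g1 (ltW n0); nra.
Qed.

Lemma within_count_part_ge (R : realFieldType) (g n m a f3 : R) :
  0 < g -> g < 1/100 -> 10 <= n -> m < g^+2 * n^+3 -> n/5 <= a -> 0 <= f3 ->
  a * (a - 1) * ((1/2 - g) * n) + 6 * f3 <= a * (a - 1) * a + 2 * m -> n/2 - 2 * g * n <= a.
Proof.
move=> g0 g1 n10 mlt an f0 hcount; rewrite leNgt; apply/negP => al.
have hab : n/5 * (n/10) <= a * (a - 1) by apply: ler_pM; lra.
have : n/5 * (n/10) * (g * n) <= a * (a - 1) * ((1/2 - g) * n - a) by apply: ler_pM; nra.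
have -> : n/5 * (n/10) * (g * n) = n^+3 * g / 50 by field.
have n0 : 0 <= n by lra.
have := sqr_cube_le g0 g1 n0; nra.
Qed.

Lemma missing_across_le (R : realFieldType) (g n m a b f1 : R) :
  0 < g -> 0 <= a -> 0 <= b -> a + b = n -> n/2 - 2 * g * n <= a ->
  a * b * ((1/2 - g) * n) + 2 * f1 <= a * b * b + 2 * m -> f1 <= 3/8 * g * n^+3 + m.
Proof.
move=> g0 a0 b0 ab an hcount.
have h1 : a * b * (b - (1/2 - g) * n) <= a * b * (3 * g * n).
  by apply: ler_wpM2l; [apply: mulr_ge0 | lra].
have h2 : a * b <= n^+2/4 by have := sqr_ge0 (a - b); rewrite -ab; nra.
have h3 : a * b * (3 * g * n) <= n^+2/4 * (3 * g * n).
  by apply: ler_wpM2r => //; apply: mulr_ge0; [apply: mulr_ge0 |]; lra.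
have -> : 3/8 * g * n^+3 = n^+2/4 * (3 * g * n) / 2 by field.
nra.
Qed.

Lemma missing_within_le (R : realFieldType) (g n m a f3 : R) :
  0 < g -> 1 <= a -> a <= n -> n/2 - 3/2 * g * n <= n - a ->
  a * (a - 1) * ((1/2 - g) * n) + 6 * f3 <= a * (a - 1) * a + 2 * m ->
  f3 <= 5/12 * g * n^+3 + m/3.
Proof.
move=> g0 a1 an bn hcount.
have h0 : 0 <= a * (a - 1) by apply: mulr_ge0; lra.
have h1 : a * (a - 1) * (a - (1/2 - g) * n) <= a * (a - 1) * (5/2 * g * n).
  by apply: ler_wpM2l => //; lra.
have h2 : a * (a - 1) <= n^+2 by rewrite expr2; apply: ler_pM; lra.
have h3 : a * (a - 1) * (5/2 * g * n) <= n^+2 * (5/2 * g * n).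
  by apply: ler_wpM2r => //; apply: mulr_ge0; [apply: mulr_ge0 |]; lra.
have -> : 5/12 * g * n^+3 = n^+2 * (5/2 * g * n) / 6 by field.
nra.
Qed.

Lemma natr_distn (R : numDomainType) (m k : nat) : (`|m - k|%N)%:R = `|m%:R - k%:R| :> R.
Proof.
have [km | mk] := leqP k m.
  by rewrite distnEl // natrB // ger0_norm // subr_ge0 ler_nat.
rewrite distnEr ?(ltnW mk) // natrB ?(ltnW mk) // distrC.
by rewrite ger0_norm // subr_ge0 ler_nat ltnW.
Qed.

Lemma half_natr_near (R : realFieldType) (n : nat) : `|(n./2)%:R - n%:R / 2| <= 1/2 :> R.
Proof.
have := odd_double_half n => /(congr1 (fun k => k%:R : R)).
rewrite natrD -muln2 natrM => hn; rewrite ler_norml.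
have o0 : 0 <= (odd n)%:R :> R by apply: ler0n.
have o1 : (odd n)%:R <= 1 :> R by case: (odd n); rewrite /= ?ler01 ?lexx.
apply/andP; split; lra.
Qed.

Lemma bin2_natr_le (R : realFieldType) (n : nat) : 'C(n, 2)%:R <= n%:R ^+ 2 / 2 :> R.
Proof.
have : (2 * 'C(n, 2) <= n * n)%N.
  rewrite bin2; have := odd_double_half (n * n.-1); rewrite -muln2.
  have : (n * n.-1 <= n * n)%N by rewrite leq_mul // leq_pred.
  lia.
rewrite -(ler_nat R) !natrM expr2; lra.
Qed.

Lemma extremal_of_near_balanced (R : realFieldType) (g : R) n
    (E : {set {set 'I_n}}) (X : {set 'I_n}) :
  0 < g -> 1 <= n%:R * g -> `|#|X|%:R - n%:R / 2| <= 2 * g * n%:R ->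
  #|Bgraph X :\: E|%:R <= 5/6 * g * n%:R ^+ 3 -> extremal (3%:R * g) E.
Proof.
move=> g0 ng Xn missX.
have kn : (n./2 <= #|'I_n|)%N by rewrite card_ord leq_half_double -addnn; lia.
have [A An AX] := exists_card_near X kn.
exists A; split=> //; split; first exact: card_setC_half.
rewrite /gcontains.
have hsw := card_missing_switch X E A; rewrite -(ler_nat R) natrD natrM in hsw.
have hD : #|(A :\: X) :|: (X :\: A)|%:R <= 2 * g * n%:R + 1/2 :> R.
  rewrite -(ler_nat R) natr_distn in AX; apply: (le_trans AX).
  apply: le_trans (ler_distD (n%:R / 2) _ _) _.
  have := half_natr_near R n; rewrite !(distrC (n%:R / 2)); lra.
have hC := bin2_natr_le R n.
have n2 : n%:R ^+ 2 <= g * n%:R ^+ 3 :> R.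
  have := ler_wpM2l (sqr_ge0 n%:R) ng; rewrite mulr1 => /le_trans; apply.
  by rewrite exprSr; lra.
have : #|(A :\: X) :|: (X :\: A)|%:R * 'C(n, 2)%:R
       <= (2 * g * n%:R + 1/2) * (n%:R ^+ 2 / 2) :> R by apply: ler_pM.
have -> : (2 * g * n%:R + 1/2) * (n%:R ^+ 2 / 2)
          = g * n%:R ^+ 3 + n%:R ^+ 2 / 4 :> R by field.
have := sqr_ge0 (n%:R : R); lra.
Qed.

Lemma sum_codeg_ge (R : numDomainType) n (E : {set {set 'I_n}}) (S : {set 'I_n})
    (T : 'I_n -> {set 'I_n}) (k : nat) (d : R) :
  (forall x, x \in S -> #|T x| = k) ->
  (forall x y, x \in S -> y \in T x -> d <= (codeg E x y)%:R) ->
  #|S|%:R * (k%:R * d) <= (\sum_(x in S) \sum_(y in T x) codeg E x y)%:R.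
Proof.
move=> Tk hd; rewrite -sum1_card natr_sum mulr_suml natr_sum; apply: ler_sum => x xS.
rewrite -(Tk x xS) -sum1_card natr_sum mulr_suml natr_sum mul1r; apply: ler_sum => y yT.
by rewrite mul1r; apply: hd.
Qed.

(* Double counting over X x ~: X: an edge through such a pair has one or two
   vertices in X, and the triples with one vertex in X through it, present or
   missing, number at most |~: X|. *)
Lemma across_pair_count (R : realFieldType) (d : R) n
    (E : {set {set 'I_n}}) (X : {set 'I_n}) :
  is_3graph E -> (forall x y, x != y -> d <= (codeg E x y)%:R) ->
  #|X|%:R * #|~: X|%:R * d + 2 * #|edges_meeting (Bgraph X :\: E) X 1|%:R <=
  #|X|%:R * #|~: X|%:R * #|~: X|%:R + 2 * #|XXY_edges E X|%:R.
Proof.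
move=> hE hd; have hF : is_3graph (Bgraph X :\: E) by apply: is_3graph_missing.
have lb : #|X|%:R * (#|~: X|%:R * d)
          <= (\sum_(x in X) \sum_(y in ~: X) codeg E x y)%:R.
  apply: sum_codeg_ge => // x y xX yNX; apply: hd.
  by apply: contraTneq yNX => <-; rewrite inE negbK.
have ub := sum_codeg_across_le X hE.
have tot := card_meeting1_le X (is_3graphU hE hF).
rewrite card_edges_meetingU ?missing_disjoint // mulnDr in tot.
rewrite -(ler_nat R) natrD !natrM in ub.
rewrite -(ler_nat R) natrD !natrM in tot.
rewrite /XXY_edges; lra.
Qed.

Lemma within_pair_count (R : realFieldType) (d : R) n
    (E : {set {set 'I_n}}) (X : {set 'I_n}) :
  is_3graph E -> (forall x y, x != y -> d <= (codeg E x y)%:R) -> (0 < #|X|)%N ->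
  #|X|%:R * (#|X|%:R - 1) * d + 6 * #|edges_meeting (Bgraph X :\: E) X 3|%:R <=
  #|X|%:R * (#|X|%:R - 1) * #|X|%:R + 2 * #|XXY_edges E X|%:R.
Proof.
move=> hE hd X0; have hF : is_3graph (Bgraph X :\: E) by apply: is_3graph_missing.
have Xpred : #|X|%:R - 1 = #|X|.-1%:R :> R by rewrite -{1}(prednK X0) -natr1 addrK.
have lb : #|X|%:R * ((#|X|%:R - 1) * d)
          <= (\sum_(x in X) \sum_(y in X :\ x) codeg E x y)%:R.
  rewrite Xpred; apply: sum_codeg_ge => [x xX | x y _]; first by rewrite (cardsD1 x X) xX.
  by rewrite !inE => /andP [yx _]; apply: hd; rewrite eq_sym.
have ub := sum_codeg_within_le X hE.
have tot := card_meeting3_le X (is_3graphU hE hF).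
rewrite card_edges_meetingU ?missing_disjoint // mulnDr in tot.
rewrite -(ler_nat R) natrD !natrM in ub.
rewrite -(ler_nat R) natrD !natrM -Xpred in tot.
rewrite /XXY_edges; lra.
Qed.

Lemma extremal_of_few_XXY (R : realFieldType) (g : R) n
    (E : {set {set 'I_n}}) (X : {set 'I_n}) :
  0 < g -> g < 1/100 -> (10 <= n)%N -> 1 <= n%:R * g -> is_3graph E ->
  (forall x y : 'I_n, x != y -> (1/2 - g) * n%:R <= (codeg E x y)%:R) ->
  (n%:R / 5 : R) <= #|X|%:R -> (n%:R / 5 : R) <= #|~: X|%:R ->
  #|XXY_edges E X|%:R < g ^+ 2 * n%:R ^+ 3 -> extremal (3%:R * g) E.
Proof.
move=> g0 g1 n10 ng hE hcodeg aX bX few.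
have cX : #|X|%:R + #|~: X|%:R = n%:R :> R by rewrite -natrD cardsC card_ord.
have n10R : 10 <= n%:R :> R by rewrite (ler_nat R 10 n).
have X0 : (0 < #|X|)%N by rewrite -(ltr_nat R); apply: lt_le_trans aX; lra.
have hA := across_pair_count X hE hcodeg.
have hB := within_pair_count hE hcodeg X0.
have n0 : 0 < n%:R :> R by lra.
have Xc_large := across_count_complement_ge g0 g1 n0 few cX aX bX (ler0n _ _) hA.
have X_large := within_count_part_ge g0 g1 n10R few aX (ler0n _ _) hB.
have f1_le := missing_across_le g0 (ler0n _ _) (ler0n _ _) cX X_large hA.
have a1 : 1 <= #|X|%:R :> R by rewrite ler1n.
have a_le : #|X|%:R <= n%:R :> R by have := ler0n R #|~: X|; lra.
have nX_large : n%:R / 2 - 3/2 * g * n%:R <= n%:R - #|X|%:R by lra.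
have f3_le := missing_within_le g0 a1 a_le nX_large hB.
have hF := card_sub_Bgraph_le (subsetDl (Bgraph X) E).
rewrite -(ler_nat R) natrD in hF.
have m_small := sqr_cube_le g0 g1 (ler0n R n).
apply: (extremal_of_near_balanced g0 ng); first by rewrite ler_norml; apply/andP; split; lra.
have : 0 <= g * n%:R ^+ 3 by apply: mulr_ge0; [exact: ltW | exact: exprn_ge0].
lra.
Qed.

Theorem lemma3p3 (R : archiRealFieldType) (g : R) :
  0 < g -> g < 1 / 100%:R ->
  exists n0 : nat, forall (n : nat), (n0 <= n)%N ->
  forall E : {set {set 'I_n}}, is_3graph E ->
  (forall x y : 'I_n, x != y -> (1 / 2%:R - g) * n%:R <= (codeg E x y)%:R) ->
  forall X : {set 'I_n},
  (n%:R / 5%:R : R) <= #|X|%:R -> (n%:R / 5%:R : R) <= #|~: X|%:R ->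
  ~ extremal (3%:R * g : R) E ->
  g ^+ 2 * n%:R ^+ 3 <= #|XXY_edges E X|%:R /\
  g ^+ 2 * n%:R ^+ 3 <= #|XYY_edges E X|%:R.
Proof.
move=> g0 g1; pose N := Num.Def.archi_bound (1 / g).
have gN : 1 / g < N%:R by apply: archi_boundP; rewrite ltW // divr_gt0.
exists (maxn 10 N) => n; rewrite geq_max => /andP [n10 nN] E hE hcodeg X aX bX notext.
have ng : 1 <= n%:R * g by rewrite -ler_pdivrMr // (le_trans (ltW gN)) // ler_nat.
split; rewrite leNgt; apply/negP => few; apply: notext.
  exact: extremal_of_few_XXY g0 g1 n10 ng hE hcodeg aX bX few.
rewrite XYY_edgesE // in few.
by apply: extremal_of_few_XXY g0 g1 n10 ng hE hcodeg bX _ few; rewrite setCK.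
Qed.
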